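(* Let $p$ be an odd prime and let $r$ be an integer with $0 \leq r \leq \frac{p-1}{2}$. Then \[ \sum_{j=r}^{\frac{p-1}{2}} \binom{2j}{j}\binom{j}{r} 2^{p-1-2j} \equiv \begin{cases} 0 \pmod{p}, & \text{if } r < \frac{p-1}{2},\\ (-1)^{\frac{p-1}{2}} \pmod{p}, & \text{if } r = \frac{p-1}{2}. \end{cases} \] *)

From mathcomp Require Import all_boot all_algebra.

From mathcomp Require Import all_boot all_algebra.
From mathcomp Require Import ring zify.
Import GRing.Theory Num.Theory.
Local Open Scope ring_scope.

(* Modulo p = 2n + 1 we have -1/2 = n, so C(2j, j) = (-4)^j C(-1/2, j) = (-4)^j C(n, j),
   while 2^(p-1-2j) = 4^(n-j) and 4^n = 2^(p-1) = 1 by Fermat.  Each summand is thus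
   (-1)^j C(n, j) C(j, r), and as C(n, j) C(j, r) = C(n, r) C(n-r, j-r) the sum collapses
   to (-1)^r C(n, r) (1 - 1)^(n-r), which vanishes unless r = n. *)

Lemma mul_bin_bin n j r : (r <= j)%N -> (j <= n)%N ->
  ('C(n, j) * 'C(j, r) = 'C(n, r) * 'C(n - r, j - r))%N.
Proof.
move=> le_rj le_jn.
have fact_gt0 : (0 < r`! * (j - r)`! * (n - j)`!)%N by rewrite !muln_gt0 !fact_gt0.
apply/eqP; rewrite -(eqn_pmul2r fact_gt0); apply/eqP.
transitivity n`!; first by rewrite -(bin_fact le_jn) -(bin_fact le_rj); ring.
have -> : (n - j = n - r - (j - r))%N by lia.
rewrite -(bin_fact (leq_trans le_rj le_jn)) -(@bin_fact (n - r) (j - r)); last by lia.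
ring.
Qed.

Lemma mul_bin_central j : (j.+1 * 'C(j.+1.*2, j.+1) = 2 * j.*2.+1 * 'C(j.*2, j))%N.
Proof.
have := mul_bin_down j.*2.+1 j; rewrite /= (_ : j.*2.+1 - j = j.+1)%N; last by lia.
rewrite -mul_bin_diag doubleS /= -mulnA => ->.
by rewrite mulnA mul2n doubleS.
Qed.

Lemma sum_bin_mul_bin_sign (R : comPzRingType) n r : (r <= n)%N ->
  \sum_(r <= j < n.+1) ('C(n, j) * 'C(j, r))%:R * (-1) ^+ j
    = (if (r < n)%N then 0 else (-1) ^+ n) :> R.
Proof.
move=> le_rn.
rewrite -{1}(add0n r) big_addn.
have -> : (n.+1 - r = (n - r).+1)%N by lia.
under eq_big_nat => i /andP[_ lt_i].
  rewrite mul_bin_bin ?leq_addl ?addnK //; last by lia.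
  rewrite natrM exprD (_ : _ * _ = 'C(n, r)%:R * (-1) ^+ r * ((-1) ^+ i * 'C(n - r, i)%:R)); last by ring.
  over.
rewrite -mulr_sumr big_mkord.
have alt_binomial : \sum_(i < (n - r).+1) (-1) ^+ i * 'C(n - r, i)%:R = 0 ^+ (n - r) :> R.
  rewrite -[in RHS](subrr (1 : R)) exprBn; apply: eq_bigr => i _.
  by rewrite !expr1n !mulr1 mulr_natr.
rewrite alt_binomial expr0n.
case: ltnP => [lt_rn | ge_rn].
  by rewrite (_ : (n - r == 0)%N = false) ?mulr0 //; lia.
have -> : r = n by lia.
by rewrite subnn binn mul1r mulr1.
Qed.

Section PrimeCharacteristic.

Context {R : idomainType} {p : nat} (pcharRp : p \in [pchar R]).

Lemma natr_neq0_pchar k : (0 < k < p)%N -> k%:R != 0 :> R.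
Proof.
case/andP=> k_gt0 lt_kp; rewrite -(dvdn_pcharf pcharRp).
by apply/negP=> /(dvdn_leq k_gt0); rewrite leqNgt lt_kp.
Qed.

Lemma natr_fermat_pchar a : a%:R != 0 :> R -> a%:R ^+ p.-1 = 1 :> R.
Proof.
move=> a_neq0; apply: (mulfI a_neq0); rewrite mulr1 -exprS.
rewrite prednK ?prime_gt0 ?(pcharf_prime pcharRp) //.
by rewrite -pFrobenius_autE pFrobenius_aut_nat.
Qed.

End PrimeCharacteristic.

Section OddCharacteristic.

Context {R : idomainType} {n : nat} (pcharR : n.*2.+1 \in [pchar R]).

Lemma bin_central_pchar j : (j <= n)%N -> 'C(j.*2, j)%:R = 'C(n, j)%:R * (-4) ^+ j :> R.
Proof.
elim: j => [|j IHj] lt_jn; first by rewrite !bin0 mulr1.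
have j1_neq0 : j.+1%:R != 0 :> R by apply: (natr_neq0_pchar pcharR); lia.
have two_oddE : 2 * (j.*2.+1)%:R = (n%:R - j%:R) * -4 :> R.
  apply/eqP; rewrite -subr_eq0; apply/eqP.
  transitivity (2 * (n.*2.+1)%:R : R); last by rewrite (pcharf0 pcharR) mulr0.
  by rewrite -[j.*2.+1]addn1 -[n.*2.+1]addn1 -!muln2 !natrD !natrM; ring.
apply: (mulfI j1_neq0); rewrite -natrM mul_bin_central !natrM IHj 1?ltnW //.
rewrite [RHS]mulrA -[in RHS]natrM mul_bin_left natrM natrB 1?ltnW // exprS.
by rewrite two_oddE; ring.
Qed.

Lemma bin_central_exp2_pchar j : (j <= n)%N ->
  ('C(j.*2, j) * 2 ^ (n.*2 - j.*2))%:R = 'C(n, j)%:R * (-1) ^+ j :> R.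
Proof.
move=> le_jn.
have n_gt0 : (0 < n)%N by case: n pcharR {le_jn} => [/pcharf_prime|].
have four_exp_n : 4 ^+ n = 1 :> R.
  have two_neq0 : 2%:R != 0 :> R by apply: (natr_neq0_pchar pcharR); lia.
  by rewrite -[RHS](natr_fermat_pchar pcharR _ two_neq0) /= -mul2n exprM -[2 ^+ 2]natrX.
rewrite natrM natrX bin_central_pchar // -doubleB -mul2n exprM -natrX /=.
by rewrite exprNn -mulrA -mulrA -exprD subnKC // four_exp_n mulr1 mulrC.
Qed.

End OddCharacteristic.

Theorem theorem4p2 (p r : nat) (hp : prime p) (hodd : odd p)
    (hr : (r <= (p - 1)./2)%N) :
  ((\sum_(r <= j < ((p - 1)./2).+1)
      ('C(2 * j, j) * 'C(j, r) * 2 ^ (p - 1 - 2 * j))%N%:Z)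
   = (if (r < (p - 1)./2)%N then 0 else (-1) ^+ ((p - 1)./2)) %[mod p])%Z.
Proof.
have [n p_eq] : exists n, p = n.*2.+1.
  by exists p./2; rewrite -[LHS](odd_double_half p) hodd add1n.
subst p; rewrite subn1 /= doubleK in hr *.
have pcharFp := pchar_Fp hp.
apply/eqP; rewrite eqz_mod_dvd (dvdz_pcharf pcharFp) rmorphB /= mulrz_sumr subr_eq0.
apply/eqP; transitivity (\sum_(r <= j < n.+1) ('C(n, j) * 'C(j, r))%:R * (-1) ^+ j
                           : 'F_(n.*2.+1)).
  apply: eq_big_nat => j /andP[_ le_jn].
  rewrite -pmulrn mulnAC !mul2n [in LHS]natrM.
  by rewrite (bin_central_exp2_pchar pcharFp _ le_jn) natrM mulrAC.
rewrite sum_bin_mul_bin_sign //.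
by case: ifP => _; rewrite ?rmorph0 ?rmorphXn ?rmorphN1.
Qed.
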